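(* Let $\Lambda$ be a finite-dimensional algebra over an algebraically closed field $k$ and let $M_1,M_2$ be finitely generated $\Lambda$-modules. Suppose there is $0\neq\beta\in\mathrm{Hom}_\Lambda(M_2,M_1)$ such that $\alpha\beta=0$ for every $\alpha\in\mathrm{Hom}_\Lambda(M_1,M_2)$. Then $\mathrm{End}_\Lambda(M_1\oplus M_2)$ is not a symmetric algebra.
   Context: An algebra $A$ is symmetric if there is a linear form $\lambda:A\to k$ with $\lambda(ab)=\lambda(ba)$ for all $a,b$ whose kernel contains no nonzero left ideal. *)

From HB Require Import structures.
From mathcomp Require Import all_boot all_order all_algebra all_field.
Set Implicit Arguments. Unset Strict Implicit. Unset Printing Implicit Defensive.
Import GRing.Theory.
Local Open Scope ring_scope.

(* A finitely generated (left) Lambda-module (equivalently, since Lambda is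
   finite dimensional, a finite-dimensional left module) of k-dimension n is
   given by a representation rho : Lambda -> 'M[k]_n acting on column vectors
   'cV_n by  a . v := rho a *m v. *)

Definition is_rep (k : fieldType) (L : falgType k) (n : nat)
  (rho : L -> 'M[k]_n) : Prop :=
  [/\ (forall (c : k) (a b : L), rho (c *: a + b) = c *: rho a + rho b),
      rho 1 = 1%:M
    & (forall a b : L, rho (a * b) = rho a *m rho b)].

(* f : 'M_(n, m) is a Lambda-linear map from the module (m, rhoM) to the
   module (n, rhoN), acting on column vectors v |-> f *m v. *)
Definition is_hom (k : fieldType) (L : falgType k) (m n : nat)
  (rhoM : L -> 'M[k]_m) (rhoN : L -> 'M[k]_n) (f : 'M[k]_(n, m)) : Prop :=
  forall a : L, f *m rhoM a = rhoN a *m f.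

Definition rep_sum (k : fieldType) (L : falgType k) (n1 n2 : nat)
  (rho1 : L -> 'M[k]_n1) (rho2 : L -> 'M[k]_n2) : L -> 'M[k]_(n1 + n2) :=
  fun a => block_mx (rho1 a) 0 0 (rho2 a).

Definition End_alg (k : fieldType) (L : falgType k) (n : nat)
  (rho : L -> 'M[k]_n) : 'M[k]_n -> Prop :=
  fun X => is_hom rho rho X.

Definition left_ideal (k : fieldType) (n : nat) (A I : 'M[k]_n -> Prop) : Prop :=
  [/\ (forall x, I x -> A x), I 0,
      (forall x y, I x -> I y -> I (x - y))
    & (forall a x, A a -> I x -> I (a *m x))].

(* A (unital subalgebra of 'M_n) is symmetric: there is a linear form lam on A
   with lam(ab) = lam(ba) whose kernel contains no nonzero left ideal.
   lam is given as a function on 'M_n, only its values on A matter. *)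
Definition is_symmetric_alg (k : fieldType) (n : nat) (A : 'M[k]_n -> Prop) : Prop :=
  exists lam : 'M[k]_n -> k,
    [/\ (forall (c : k) x y, A x -> A y -> lam (c *: x + y) = c * lam x + lam y),
        (forall x y, A x -> A y -> lam (x *m y) = lam (y *m x))
      & (forall I, left_ideal A I -> (forall x, I x -> lam x = 0) ->
           forall x, I x -> x = 0)].

From HB Require Import structures.
From mathcomp Require Import all_boot all_order all_algebra all_field.
Set Implicit Arguments. Unset Strict Implicit. Unset Printing Implicit Defensive.
Import GRing.Theory.
Local Open Scope ring_scope.

(* Let [B = iota_1 beta pi_2] in [E = End(M1 (+) M2)] and let [e = iota_2 pi_2].
   Then [B e = B], and for every [X] in [E] the corner [pi_2 X iota_1] is a map
   [M1 -> M2], so [e X B = iota_2 (pi_2 X iota_1) beta pi_2 = 0].  A symmetrising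
   form [lam] therefore satisfies [lam (X B) = lam (X B e) = lam (e X B) = 0],
   i.e. it kills the nonzero left ideal [E B]. *)

Section SymmetricSubalgebra.

Variables (k : fieldType) (n : nat) (A : 'M[k]_n -> Prop).
Hypothesis A1 : A 1%:M.
Hypothesis A_sub : forall x y, A x -> A y -> A (x - y).
Hypothesis A_mul : forall x y, A x -> A y -> A (x *m y).

Definition principal_left_ideal (b : 'M[k]_n) : 'M[k]_n -> Prop :=
  fun x => exists2 X, A X & x = X *m b.

Lemma left_ideal_principal b : A b -> left_ideal A (principal_left_ideal b).
Proof.
move=> Ab; split.
- by move=> _ [X AX ->]; apply: A_mul.
- by exists 0; [rewrite -(subrr 1%:M); apply: A_sub | rewrite mul0mx].
- by move=> _ _ [X AX ->] [Y AY ->]; exists (X - Y); [apply: A_sub | rewrite mulmxBl].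
- by move=> a _ Aa [X AX ->]; exists (a *m X); [apply: A_mul | rewrite mulmxA].
Qed.

Lemma not_symmetric_of_annihilated_corner (b e : 'M[k]_n) :
  A b -> A e -> b != 0 -> b *m e = b ->
  (forall X, A X -> e *m X *m b = 0) -> ~ is_symmetric_alg A.
Proof.
move=> Ab Ae /eqP b_neq0 be_b eAb_0 [lam [lam_lin lam_tr lam_ker]].
have A0 : A 0 by rewrite -(subrr 1%:M); apply: A_sub.
have lam0 : lam 0 = 0.
  apply: (@addrI _ (lam 0)); rewrite addr0.
  by have := lam_lin 1 0 0 A0 A0; rewrite scale1r addr0 mul1r.
apply/b_neq0/(lam_ker _ (left_ideal_principal Ab)); last by exists 1%:M; rewrite ?mul1mx.
move=> _ [X AX ->].
by rewrite -{1}be_b mulmxA lam_tr ?mulmxA ?eAb_0 //; apply: A_mul.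
Qed.

End SymmetricSubalgebra.

Section ModuleHomomorphisms.

Variables (k : fieldType) (L : falgType k).

Lemma is_hom1 n (rho : L -> 'M[k]_n) : is_hom rho rho 1%:M.
Proof. by move=> a; rewrite mulmx1 mul1mx. Qed.

Lemma is_hom_sub m n (rhoM : L -> 'M[k]_m) (rhoN : L -> 'M[k]_n) f g :
  is_hom rhoM rhoN f -> is_hom rhoM rhoN g -> is_hom rhoM rhoN (f - g).
Proof. by move=> hf hg a; rewrite mulmxBl mulmxBr hf hg. Qed.

Lemma is_hom_mul m n p (rhoM : L -> 'M[k]_m) (rhoN : L -> 'M[k]_n)
    (rhoP : L -> 'M[k]_p) f g :
  is_hom rhoM rhoN f -> is_hom rhoN rhoP g -> is_hom rhoM rhoP (g *m f).
Proof. by move=> hf hg a; rewrite -mulmxA hf !mulmxA hg. Qed.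

Variables (n1 n2 : nat) (rho1 : L -> 'M[k]_n1) (rho2 : L -> 'M[k]_n2).

Definition sum_inl : 'M[k]_(n1 + n2, n1) := col_mx 1%:M 0.
Definition sum_inr : 'M[k]_(n1 + n2, n2) := col_mx 0 1%:M.
Definition sum_projl : 'M[k]_(n1, n1 + n2) := row_mx 1%:M 0.
Definition sum_projr : 'M[k]_(n2, n1 + n2) := row_mx 0 1%:M.

Lemma is_hom_sum_inl : is_hom rho1 (rep_sum rho1 rho2) sum_inl.
Proof.
by move=> a; rewrite /rep_sum /sum_inl mul_block_col mul_col_mx !mulmx1 !mulmx0 !mul0mx !addr0 mul1mx.
Qed.

Lemma is_hom_sum_inr : is_hom rho2 (rep_sum rho1 rho2) sum_inr.
Proof.
by move=> a; rewrite /rep_sum /sum_inr mul_block_col mul_col_mx !mulmx1 !mulmx0 !mul0mx !add0r mul1mx.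
Qed.

Lemma is_hom_sum_projr : is_hom (rep_sum rho1 rho2) rho2 sum_projr.
Proof.
by move=> a; rewrite /rep_sum /sum_projr mul_row_block mul_mx_row !mulmx1 !mulmx0 !mul0mx !add0r mul1mx.
Qed.

Lemma sum_projl_inl : sum_projl *m sum_inl = 1%:M.
Proof. by rewrite mul_row_col mul0mx addr0 mulmx1. Qed.

Lemma sum_projr_inr : sum_projr *m sum_inr = 1%:M.
Proof. by rewrite mul_row_col mul0mx add0r mulmx1. Qed.

End ModuleHomomorphisms.

Arguments sum_inl {k n1 n2}.
Arguments sum_inr {k n1 n2}.
Arguments sum_projl {k n1 n2}.
Arguments sum_projr {k n1 n2}.

Theorem lemma4p1 (k : closedFieldType) (L : falgType k) (n1 n2 : nat)
  (rho1 : L -> 'M[k]_n1) (rho2 : L -> 'M[k]_n2) :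
  is_rep rho1 -> is_rep rho2 ->
  forall beta : 'M[k]_(n1, n2),
    is_hom rho2 rho1 beta -> beta != 0 ->
    (forall alpha : 'M[k]_(n2, n1), is_hom rho1 rho2 alpha -> alpha *m beta = 0) ->
    ~ is_symmetric_alg (End_alg (rep_sum rho1 rho2)).
Proof.
move=> _ _ beta hom_beta beta_neq0 beta_ann.
have hom_inl := is_hom_sum_inl rho1 rho2.
have hom_inr := is_hom_sum_inr rho1 rho2.
have hom_projr := is_hom_sum_projr rho1 rho2.
pose B : 'M[k]_(n1 + n2) := sum_inl *m beta *m sum_projr.
pose e : 'M[k]_(n1 + n2) := sum_inr *m sum_projr.
apply: (@not_symmetric_of_annihilated_corner _ _ _ _ _ _ B e).
- exact: is_hom1.
- exact: is_hom_sub.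
- by move=> X Y hX hY; apply: is_hom_mul hY hX.
- by apply: is_hom_mul hom_projr _; apply: is_hom_mul hom_beta hom_inl.
- exact: is_hom_mul hom_projr hom_inr.
- apply: contraNneq beta_neq0 => B0.
  have <- : sum_projl *m B *m sum_inr = beta.
    by rewrite !mulmxA sum_projl_inl mul1mx -mulmxA sum_projr_inr mulmx1.
  by rewrite B0 mulmx0 mul0mx.
- by rewrite /B /e -!mulmxA (mulmxA sum_projr) sum_projr_inr mul1mx.
- move=> X hX.
  have hom_corner : is_hom rho1 rho2 (sum_projr *m X *m sum_inl).
    by apply: is_hom_mul hom_inl _; apply: is_hom_mul hX hom_projr.
  have -> : e *m X *m B = sum_inr *m (sum_projr *m X *m sum_inl *m beta) *m sum_projr.
    by rewrite /e /B !mulmxA.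
  by rewrite beta_ann // mulmx0 mul0mx.
Qed.
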